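(* Let $\mathcal X$ be a finite set with $|\mathcal X|\ge n\ge1$, $s:2^{\mathcal X}\to\mathbb R$ non-negative and monotone, $d$ a metric on $\mathcal X$, $\mathrm{div}$ the associated sum-dispersion, $\lambda>0$, and $\alpha\in(0,1]$. Let $B_n$ be the output of an $\alpha$-approximate greedy run for the set function $\tilde a:=\tfrac12 s+\lambda\,\mathrm{div}$ with cardinality $n$, let $a:=s+\lambda\,\mathrm{div}$, and let $B_n^*\in\arg\max_{B\subseteq\mathcal X,|B|=n}a(B)$. Then $$a(B_n)\ge\frac{\alpha\hat\gamma}{2}\,a(B_n^* ),\qquad\hat\gamma:=\gamma_{B_n^*\cup B_n,n}(s).$$
   Context: Marginal gain: $\Delta_f(x\mid B):=f(B\cup\{x\})-f(B)$ for a set function $f$. $s$ is monotone if $\Delta_s(x\mid B)\ge0$ for all $B$ and $x\notin B$; non-negative if $s(B)\ge0$ for all $B$. Sum-dispersion: $\mathrm{div}(B):=\frac12\sum_{x\in B}\sum_{x'\in B}d(x,x')$. An $\alpha$-approximate greedy run for a set function $f$ with cardinality $n$: $B_0=\emptyset$ and for $i=0,\dots,n-1$ an element $x_i\in\mathcal X\setminus B_i$ is chosen with $\Delta_f(x_i\mid B_i)\ge\alpha\max_{x\in\mathcal X\setminus B_i}\Delta_f(x\mid B_i)$, and $B_{i+1}=B_i\cup\{x_i\}$; its output is $B_n$. Submodularity ratio: $\gamma_{B,n}(s):=\min_{S\subseteq\mathcal X,\ B'\subseteq B\setminus S,\ |S|\le n}\frac{\sum_{x\in S}\Delta_s(x\mid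 B')}{s(B'\cup S)-s(B')}$, with $0/0:=1$ and $c/0:=+\infty$ for $c>0$. *)

From HB Require Import structures.
From mathcomp Require Import all_boot all_order all_algebra.
Set Implicit Arguments. Unset Strict Implicit. Unset Printing Implicit Defensive.
Import Order.TTheory GRing.Theory Num.Theory.
Local Open Scope ring_scope.

Section Defs.
Variables (R : realFieldType) (X : finType).

Definition marg (f : {set X} -> R) (x : X) (B : {set X}) : R :=
  f (x |: B) - f B.

Definition monotone_set (f : {set X} -> R) : Prop :=
  forall (B : {set X}) (x : X), x \notin B -> 0 <= marg f x B.

Definition nonneg_set (f : {set X} -> R) : Prop :=
  forall B : {set X}, 0 <= f B.

Definition is_metric (d : X -> X -> R) : Prop :=
  [/\ forall x y, d x y = 0 <-> x = y,
      forall x y, d x y = d y x &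
      forall x y z, d x z <= d x y + d y z].

Definition sumdisp (d : X -> X -> R) (B : {set X}) : R :=
  2^-1 * \sum_(x in B) \sum_(x' in B) d x x'.

(* ratio with conventions 0/0 := 1 and c/0 := +oo for c > 0; a +oo value
   is represented by 1, which does not change the minimum below since the
   pair (S, B') = (set0, set0) always contributes 0/0 = 1 *)
Definition sratio (num den : R) : R := if den == 0 then 1 else num / den.

Definition subm_ratio (s : {set X} -> R) (B : {set X}) (n : nat) : R :=
  \big[Order.min/1]_(S : {set X} | (#|S| <= n)%N)
   \big[Order.min/1]_(B' : {set X} | B' \subset B :\: S)
     sratio (\sum_(x in S) marg s x B') (s (B' :|: S) - s B').

Definition gprefix (x : nat -> X) (i : nat) : {set X} :=
  \bigcup_(j < i) [set x j].

Definition approx_greedy_run (f : {set X} -> R) (alpha : R) (n : nat)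
  (x : nat -> X) : Prop :=
  forall i, (i < n)%N ->
    x i \notin gprefix x i /\
    forall y, y \notin gprefix x i ->
      alpha * marg f y (gprefix x i) <= marg f (x i) (gprefix x i).

End Defs.

From HB Require Import structures.
From mathcomp Require Import all_boot all_order all_algebra ring lra zify.
Import Order.TTheory GRing.Theory Num.Theory.
Set Implicit Arguments. Unset Strict Implicit.
Local Open Scope ring_scope.

(* Write O for B_n^*, B_i for the i-th greedy prefix and f for the surrogate
   objective s/2 + lambda div.  At step i every y in O \ B_i was a candidate,
   so |O \ B_i| times the gain of step i is at least alpha times the summed
   f-gains of O \ B_i over B_i.  Their s-part is at least gamma (s O - s B_n)
   by the submodularity ratio (as O \ B_i is disjoint from B_i, which lies in
   O u B_n), and their dispersion part is the total distance between O \ B_i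
   and B_i, which the triangle inequality bounds below by
   |O \ B_i| i div(O) / (n (n - 1)), as in the analysis of greedy max-sum
   dispersion.  Using |O \ B_i| <= n and summing over i < n,
   f(B_n) >= alpha gamma (s O - s B_n) / 2 + alpha lambda div(O) / 2, which
   rearranges to the claim because alpha gamma <= 1. *)

Lemma sumr_setU_disjoint (V : nmodType) (X : finType) (A B : {set X}) (F : X -> V) :
  [disjoint A & B] -> \sum_(i in A :|: B) F i = \sum_(i in A) F i + \sum_(i in B) F i.
Proof. by move=> dAB; rewrite -bigU //; apply: eq_bigl => i; rewrite inE. Qed.

(* [a], [b], [c] stand for the sizes of O \ G, G \ O and O :&: G, [DA], [DC]
   for the dispersions of O \ G and O :&: G, and [X], [Y] for the distances
   from O \ G to O :&: G and to G \ O. *)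
Lemma partition_dispersion_ineq (R : realFieldType) (a b c DA DC X Y : R) :
  b + 1 <= a -> 0 <= b -> 0 <= c -> 0 <= X -> 0 <= Y -> 0 <= DA ->
  b * DA <= (a - 1) * Y -> c * DA <= (a - 1) * X -> a * DC <= (c - 1) * X ->
  a * (b + c) * (DA + DC + X) <= (a + c) * (a + c - 1) * (X + Y).
Proof.
move=> hab hb hc hX hY hDA hbDA hcDA haDC.
have bound_DA : a * (b + c) * DA <= (a + c - 1) * ((a - b) * X + (a + c) * Y).
  have [a_eq1 | a_gt1] : a = 1 \/ 1 < a by lra.
    have b0 : b = 0 by lra.
    subst a b; rewrite subrr mul0r in hcDA; nra.
  have am1 : 0 < a - 1 by lra.
  rewrite -(ler_pM2l am1).
  have h1 : (a + c - 1) * (a - b) * (c * DA) <= (a + c - 1) * (a - b) * ((a - 1) * X).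
    by apply: ler_wpM2l => //; apply: mulr_ge0; lra.
  have h2 : (a + c - 1) * (a + c) * (b * DA) <= (a + c - 1) * (a + c) * ((a - 1) * Y).
    by apply: ler_wpM2l => //; apply: mulr_ge0; lra.
  have h3 : 0 <= a * c * (b + c) * DA by apply: mulr_ge0 => //; apply: mulr_ge0; nra.
  nra.
have hDC : (b + c) * (a * DC) <= (b + c) * ((c - 1) * X) by apply: ler_wpM2l; lra.
nra.
Qed.

(* [m] may vanish, in which case [iD / m = 0]. *)
Lemma gain_step_arith (R : realFieldType) (al la a n m K S E iD g : R) :
  0 < al -> 0 < la -> 0 < a -> a <= n -> 0 <= m -> 0 <= S -> 0 <= E -> K <= S ->
  a * iD <= m * E -> al * (2^-1 * S + la * E) <= a * g ->
  al * K / (2 * n) + al * la * (iD / m) <= g.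
Proof.
move=> al_gt0 la_gt0 a_gt0 le_an m_ge0 S_ge0 E_ge0 le_KS le_iD le_g.
have n_gt0 : 0 < n by apply: lt_le_trans le_an.
have g_ge : al * S / (2 * a) + al * la * (E / a) <= g.
  rewrite -(ler_pM2l a_gt0); apply: le_trans le_g; rewrite le_eqVlt; apply/predU1P; left.
  by field; rewrite gt_eqF.
have le_Sn : al * K / (2 * n) <= al * S / (2 * a).
  have le_inv : (2 * n)^-1 <= (2 * a)^-1.
    by rewrite lef_pV2 ?posrE ?ler_pM2l //; apply: mulr_gt0.
  apply: (@le_trans _ _ (al * S / (2 * n))).
    by rewrite ler_wpM2r ?invr_ge0 ?ler_wpM2l ?mulr_ge0 // ltW.
  by rewrite ler_wpM2l // mulr_ge0 // ltW.
have le_DE : iD / m <= E / a.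
  have [m0 | m_neq0] := eqVneq m 0; first by rewrite m0 invr0 mulr0 divr_ge0 // ltW.
  have m_gt0 : 0 < m by rewrite lt_def m_neq0.
  by rewrite ler_pdivrMr // mulrAC ler_pdivlMr // mulrC [E * m]mulrC.
have : al * la * (iD / m) <= al * la * (E / a) by rewrite ler_wpM2l // ?mulr_ge0 // ltW.
lra.
Qed.

Lemma sumr_nat_id (R : realFieldType) n :
  \sum_(0 <= i < n) (i%:R : R) = n%:R * (n%:R - 1) / 2.
Proof.
elim: n => [|n IH]; first by rewrite big_nil mul0r mul0r.
by rewrite big_nat_recr //= IH -natr1; field.
Qed.

Lemma approx_ratio_arith (R : realFieldType) (al la gam sO sB DO DB : R) :
  0 < al -> al <= 1 -> 0 < la -> 0 <= gam -> gam <= 1 -> 0 <= sB -> 0 <= DO ->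
  al * (gam * (sO - sB)) / 2 + al * la * DO / 2 <= 2^-1 * sB + la * DB ->
  al * gam / 2 * (sO + la * DO) <= sB + la * DB.
Proof.
move=> al_gt0 al_le1 la_gt0 gam_ge0 gam_le1 sB_ge0 DO_ge0 gain.
have alg_le1 : al * gam <= 1 by nra.
have : 0 <= al * la * DO * (1 - gam) by rewrite !mulr_ge0 ?subr_ge0 // ltW.
nra.
Qed.

Section Dispersion.
Variables (R : realFieldType) (X : finType) (d : X -> X -> R).
Hypothesis d_metric : is_metric d.

Definition sumdist (P Q : {set X}) : R := \sum_(x in P) \sum_(y in Q) d x y.

Lemma metric_refl x : d x x = 0.
Proof. by case: d_metric => h _ _; apply/h. Qed.

Lemma metric_ge0 x y : 0 <= d x y.
Proof.
case: d_metric => _ dC dtri; have := dtri x y x; rewrite metric_refl dC; lra.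
Qed.

Lemma sumdist_ge0 (P Q : {set X}) : 0 <= sumdist P Q.
Proof. by apply: sumr_ge0 => x _; apply: sumr_ge0 => y _; exact: metric_ge0. Qed.

Lemma sumdistC (P Q : {set X}) : sumdist P Q = sumdist Q P.
Proof.
case: d_metric => _ dC _; rewrite /sumdist exchange_big.
by apply: eq_bigr => x _; apply: eq_bigr => y _; exact: dC.
Qed.

Lemma sumdistUl (P1 P2 Q : {set X}) : [disjoint P1 & P2] ->
  sumdist (P1 :|: P2) Q = sumdist P1 Q + sumdist P2 Q.
Proof. exact: sumr_setU_disjoint. Qed.

Lemma sumdistUr (P Q1 Q2 : {set X}) : [disjoint Q1 & Q2] ->
  sumdist P (Q1 :|: Q2) = sumdist P Q1 + sumdist P Q2.
Proof.
by move=> dQ; rewrite /sumdist -big_split; apply: eq_bigr => x _; exact: sumr_setU_disjoint.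
Qed.

Lemma sumdisp_sumdist (P : {set X}) : sumdisp d P = 2^-1 * sumdist P P.
Proof. by []. Qed.

Lemma sumdisp_ge0 (P : {set X}) : 0 <= sumdisp d P.
Proof. by apply: mulr_ge0; [rewrite invr_ge0 ler0n | exact: sumdist_ge0]. Qed.

Lemma sumdisp_set1 x : sumdisp d [set x] = 0.
Proof. by rewrite sumdisp_sumdist /sumdist !big_set1 metric_refl mulr0. Qed.

Lemma sumdispU (A C : {set X}) : [disjoint A & C] ->
  sumdisp d (A :|: C) = sumdisp d A + sumdisp d C + sumdist A C.
Proof.
move=> dAC; rewrite !sumdisp_sumdist sumdistUl // !sumdistUr // [sumdist C A]sumdistC.
rewrite !mulrDr; lra.
Qed.

Lemma marg_sumdisp (G : {set X}) y : y \notin G -> marg (sumdisp d) y G = \sum_(g in G) d y g.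
Proof.
move=> yG; rewrite /marg sumdispU ?disjoints1 // sumdisp_set1 /sumdist big_set1; lra.
Qed.

(* Sum [d x x' <= d x q + d x' q] over [x != x'] in [P] and [q] in [Q]. *)
Lemma card_mul_sumdisp_le (P Q : {set X}) :
  #|Q|%:R * sumdisp d P <= (#|P|%:R - 1) * sumdist P Q.
Proof.
case: d_metric => _ dC dtri.
have pt x : x \in P -> #|Q|%:R * \sum_(x' in P) d x x' + 2 * \sum_(q in Q) d x q
    <= \sum_(x' in P) (\sum_(q in Q) d x q + \sum_(q in Q) d x' q).
  move=> xP; rewrite (bigD1 x xP) [X in _ <= X](bigD1 x xP) /= metric_refl.
  suff : \sum_(x' in P | x' != x) #|Q|%:R * d x x' <=
         \sum_(x' in P | x' != x) (\sum_(q in Q) d x q + \sum_(q in Q) d x' q).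
    rewrite -mulr_sumr; lra.
  apply: ler_sum => x' _; rewrite mulr_natl -sumr_const -big_split.
  by apply: ler_sum => q _; rewrite (dC x' q); exact: dtri.
have := ler_sum (index_enum X) pt.
rewrite big_split -!mulr_sumr /= -/(sumdist P P) -/(sumdist P Q).
have -> : \sum_(x in P) \sum_(x' in P) (\sum_(q in Q) d x q + \sum_(q in Q) d x' q)
          = 2 * #|P|%:R * sumdist P Q.
  rewrite /sumdist; under eq_bigr => x _ do rewrite big_split sumr_const -mulr_natl.
  by rewrite big_split /= sumr_const -mulr_sumr -mulr_natr; ring.
rewrite sumdisp_sumdist; lra.
Qed.

Lemma sumdisp_le_sumdist_setD (O G : {set X}) : (#|G| < #|O|)%N ->
  #|O :\: G|%:R * #|G|%:R * sumdisp d O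
    <= #|O|%:R * (#|O|%:R - 1) * sumdist (O :\: G) G.
Proof.
move=> ltGO; set A := O :\: G; set C := O :&: G; set B := G :\: O.
have dAC : [disjoint A & C].
  by rewrite -setI_eq0; apply/eqP/setP => y; rewrite !inE; case: (y \in G); case: (y \in O).
have dCB : [disjoint C & B].
  by rewrite -setI_eq0; apply/eqP/setP => y; rewrite !inE; case: (y \in G); case: (y \in O).
have cardO : #|O| = (#|C| + #|A|)%N by rewrite cardsID.
have cardG : #|G| = (#|C| + #|B|)%N by rewrite /C setIC cardsID.
have dispO : sumdisp d O = sumdisp d A + sumdisp d C + sumdist A C.
  by rewrite -sumdispU // setUC /A /C setID.
have distAG : sumdist A G = sumdist A C + sumdist A B.
  by rewrite -sumdistUr // /C setIC setID.
have hC := card_mul_sumdisp_le C A; rewrite sumdistC in hC.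
have := partition_dispersion_ineq _ (ler0n R #|B|) (ler0n R #|C|)
  (sumdist_ge0 A C) (sumdist_ge0 A B) (sumdisp_ge0 A)
  (card_mul_sumdisp_le A B) (card_mul_sumdisp_le A C) hC.
rewrite dispO distAG cardO cardG !natrD (addrC #|C|%:R #|A|%:R) (addrC #|C|%:R #|B|%:R).
have le_BA : (#|B| + 1 <= #|A|)%N by lia.
by apply; rewrite -(ler_nat R) natrD in le_BA.
Qed.
End Dispersion.

Section SetFunction.
Variables (R : realFieldType) (X : finType) (s : {set X} -> R).
Hypothesis s_mono : monotone_set s.

Lemma monotone_set_subset (B C : {set X}) : B \subset C -> s B <= s C.
Proof.
have [k] := ubnP #|C|; elim: k C => // k IH C /ltnSE leCk sBC.
case: (set_0Vmem (C :\: B)) => [/eqP | [y]].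
  by rewrite setD_eq0 => sCB; have -> : B = C by apply/eqP; rewrite eqEsubset sBC.
rewrite inE => /andP[yNB yC].
have sBCy : B \subset C :\ y by rewrite subsetD1 sBC yNB.
apply: le_trans (IH _ _ sBCy) _.
  by apply: leq_trans leCk; rewrite proper_card // properD1.
by rewrite -{2}(setD1K yC) -subr_ge0; apply: s_mono; rewrite !inE eqxx.
Qed.

Lemma sum_marg_ge0 (S B : {set X}) : [disjoint S & B] ->
  0 <= \sum_(x in S) marg s x B.
Proof. by move=> dSB; apply: sumr_ge0 => x xS; apply: s_mono; rewrite (disjointFr dSB). Qed.

Lemma subm_ratio_le1 (B : {set X}) n : subm_ratio s B n <= 1.
Proof. exact: bigmin_le_id. Qed.

Lemma subm_ratio_ge0 (B : {set X}) n : 0 <= subm_ratio s B n.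
Proof.
apply: le_bigmin => // S _; apply: le_bigmin => // B' /subsetDP[_ dB'S].
rewrite /sratio; case: eqP => // _; apply: divr_ge0.
  by apply: sum_marg_ge0; rewrite disjoint_sym.
by rewrite subr_ge0 monotone_set_subset // subsetUl.
Qed.

Lemma subm_ratio_mul_le (B S B' : {set X}) n :
  (#|S| <= n)%N -> B' \subset B :\: S ->
  subm_ratio s B n * (s (B' :|: S) - s B') <= \sum_(x in S) marg s x B'.
Proof.
move=> leSn sB'; have /subsetDP[_ dB'S] := sB'.
have ratio_le : subm_ratio s B n <=
    sratio (\sum_(x in S) marg s x B') (s (B' :|: S) - s B').
  exact: le_trans (bigmin_le_cond _ _ leSn) (bigmin_le_cond _ _ sB').
move: ratio_le; rewrite /sratio; case: eqP => [-> _ | /eqP gain_neq0].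
  by rewrite mulr0 sum_marg_ge0 // disjoint_sym.
have gain_gt0 : 0 < s (B' :|: S) - s B'.
  by rewrite lt_def gain_neq0 subr_ge0 monotone_set_subset // subsetUl.
by rewrite ler_pdivlMr.
Qed.

End SetFunction.

Section GreedyPrefix.
Variables (X : finType) (x : nat -> X).

Lemma gprefix0 : gprefix x 0 = set0.
Proof. by rewrite /gprefix big_ord0. Qed.

Lemma gprefixS i : gprefix x i.+1 = x i |: gprefix x i.
Proof. by rewrite /gprefix big_ord_recr setUC. Qed.

Lemma gprefix_subset i j : (i <= j)%N -> gprefix x i \subset gprefix x j.
Proof.
elim: j => [|j IH]; first by rewrite leqn0 => /eqP ->.
rewrite leq_eqVlt ltnS => /orP[/eqP -> // | /IH sub_ij].
by rewrite gprefixS (subset_trans sub_ij) // subsetUr.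
Qed.

End GreedyPrefix.

Section GreedyRun.
Variables (R : realFieldType) (X : finType) (f : {set X} -> R) (alpha : R).
Variables (n : nat) (x : nat -> X).
Hypothesis greedy : approx_greedy_run f alpha n x.

Lemma card_gprefix i : (i <= n)%N -> #|gprefix x i| = i.
Proof.
elim: i => [|i IH] le_in; first by rewrite gprefix0 cards0.
by rewrite gprefixS cardsU1 IH ?(ltnW le_in) //; have [-> _] := greedy le_in.
Qed.

Lemma greedy_sum_marg_le i (A : {set X}) : (i < n)%N -> [disjoint A & gprefix x i] ->
  alpha * \sum_(y in A) marg f y (gprefix x i) <= #|A|%:R * marg f (x i) (gprefix x i).
Proof.
move=> lt_in dA; have [_ best] := greedy lt_in.
rewrite mulr_sumr mulr_natl -sumr_const; apply: ler_sum => y yA.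
by apply: best; rewrite (disjointFr dA).
Qed.

End GreedyRun.

Definition greedy_objective (R : realFieldType) (X : finType)
  (s : {set X} -> R) (d : X -> X -> R) (lambda : R) (B : {set X}) : R :=
  2^-1 * s B + lambda * sumdisp d B.

Section GreedyObjective.
Variables (R : realFieldType) (X : finType) (s : {set X} -> R) (d : X -> X -> R).
Variables (lambda alpha : R) (n : nat) (x : nat -> X) (O : {set X}).
Hypotheses (s_mono : monotone_set s) (d_metric : is_metric d).
Hypotheses (lambda_gt0 : 0 < lambda) (alpha_gt0 : 0 < alpha).
Hypothesis greedy : approx_greedy_run (greedy_objective s d lambda) alpha n x.
Hypothesis cardO : #|O| = n.

Local Notation f := (greedy_objective s d lambda).
Local Notation gamma := (subm_ratio s (O :|: gprefix x n) n).

Lemma marg_greedy_objective (G : {set X}) y : y \notin G ->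
  marg f y G = 2^-1 * marg s y G + lambda * \sum_(g in G) d y g.
Proof.
by move=> yG; rewrite -(marg_sumdisp d_metric yG) /marg /greedy_objective; ring.
Qed.

Lemma greedy_gain_ge i : (i < n)%N ->
  alpha * (gamma * (s O - s (gprefix x n))) / (2 * n%:R)
    + alpha * lambda * (i%:R * sumdisp d O / (n%:R * (n%:R - 1)))
  <= marg f (x i) (gprefix x i).
Proof.
move=> lt_in; set G := gprefix x i; set A := O :\: G.
have cardG : #|G| = i := card_gprefix greedy (ltnW lt_in).
have dAG : [disjoint A & G] by rewrite disjoints_subset /A setDE subsetIr.
have cardO_split : (#|O :&: G| + #|A| = n)%N by rewrite cardsID.
have cardOG : (#|O :&: G| <= i)%N by rewrite -cardG subset_leq_card // subsetIr.
have greedy_bound : alpha * (2^-1 * \sum_(y in A) marg s y G + lambda * sumdist d A G)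
    <= #|A|%:R * marg f (x i) G.
  apply: le_trans (greedy_sum_marg_le greedy lt_in dAG); rewrite le_eqVlt; apply/predU1P; left.
  rewrite mulr_sumr /sumdist mulr_sumr -big_split; congr (_ * _).
  by apply: eq_bigr => y yA; rewrite marg_greedy_objective // (disjointFr dAG).
have ratio_bound : gamma * (s O - s (gprefix x n)) <= \sum_(y in A) marg s y G.
  have sub_G : G \subset (O :|: gprefix x n) :\: A.
    by rewrite subsetD subsetU ?gprefix_subset ?orbT 1?ltnW // disjoint_sym.
  have leAn : (#|A| <= n)%N by rewrite -cardO subset_leq_card // subsetDl.
  apply: le_trans _ (subm_ratio_mul_le s_mono leAn sub_G).
  apply: ler_wpM2l; first exact: subm_ratio_ge0 s_mono _ _.
  have sO : s O <= s (G :|: A).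
    by apply: (monotone_set_subset s_mono); apply/subsetP => y yO; rewrite !inE yO andbT orbN.
  have sG : s G <= s (gprefix x n).
    by apply: (monotone_set_subset s_mono); rewrite gprefix_subset // ltnW.
  lra.
have disp_bound : #|A|%:R * (i%:R * sumdisp d O)
    <= n%:R * (n%:R - 1) * sumdist d A G.
  by rewrite mulrA -cardG -cardO sumdisp_le_sumdist_setD // cardG cardO.
apply: (gain_step_arith alpha_gt0 lambda_gt0 _ _ _ _ _ ratio_bound disp_bound greedy_bound).
- by rewrite ltr0n; lia.
- by rewrite ler_nat; lia.
- by rewrite mulr_ge0 // subr_ge0 ler1n; lia.
- exact: (sum_marg_ge0 s_mono dAG).
- exact: sumdist_ge0 d_metric _ _.
Qed.

Hypothesis n_gt0 : (0 < n)%N.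

Lemma greedy_objective_gain :
  alpha * (gamma * (s O - s (gprefix x n))) / 2 + alpha * lambda * sumdisp d O / 2
  <= f (gprefix x n) - f set0.
Proof.
rewrite -(gprefix0 x) -(telescope_sumr_eq (fun i => f (gprefix x i))
  (fun i => marg f (x i) (gprefix x i)) (leq0n n)); last by move=> k _; rewrite /marg gprefixS.
apply: (le_trans _ (ler_sum_nat _)) => [|i /andP[_ lt_in]]; last exact: greedy_gain_ge.
rewrite big_split /= sumr_const_nat subn0 -mulr_sumr.
under eq_big_nat => i _ do rewrite -mulrA.
rewrite -mulr_suml sumr_nat_id.
(* For n = 1 the division by n (n - 1) = 0 gives 0, which is harmless
   because a singleton has dispersion 0. *)
have disp_eq : n%:R * (n%:R - 1) / 2 * (sumdisp d O / (n%:R * (n%:R - 1))) = sumdisp d O / 2.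
  have [n_eq1 | n_gt1] : n = 1%N \/ (1 < n)%N by lia.
    have /cards1P[o ->] : #|O| == 1%N by rewrite cardO n_eq1.
    by rewrite (sumdisp_set1 d_metric) !mul0r mulr0.
  have n_neq0 : n%:R != 0 :> R by rewrite pnatr_eq0 -lt0n.
  have n1_neq0 : n%:R - 1 != 0 :> R by rewrite subr_eq0 pnatr_eq1 gtn_eqF.
  by field; rewrite n_neq0 n1_neq0.
rewrite disp_eq -mulr_natr.
have n_neq0 : n%:R != 0 :> R by rewrite pnatr_eq0 -lt0n.
by rewrite le_eqVlt; apply/predU1P; left; field.
Qed.

End GreedyObjective.

Theorem mainTheorem11 (R : realFieldType) (X : finType) (n : nat)
  (s : {set X} -> R) (d : X -> X -> R) (lambda alpha : R)
  (x : nat -> X) (Bstar : {set X}) :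
  (1 <= n)%N -> (n <= #|X|)%N ->
  nonneg_set s -> monotone_set s -> is_metric d ->
  0 < lambda -> 0 < alpha -> alpha <= 1 ->
  approx_greedy_run (fun B => 2^-1 * s B + lambda * sumdisp d B) alpha n x ->
  #|Bstar| = n ->
  (forall B : {set X}, #|B| = n ->
     s B + lambda * sumdisp d B <= s Bstar + lambda * sumdisp d Bstar) ->
  alpha * subm_ratio s (Bstar :|: gprefix x n) n / 2
    * (s Bstar + lambda * sumdisp d Bstar)
  <= s (gprefix x n) + lambda * sumdisp d (gprefix x n).
Proof.
move=> n_gt0 _ s_ge0 s_mono d_metric lambda_gt0 alpha_gt0 alpha_le1 greedy cardO _.
have gain := greedy_objective_gain s_mono d_metric lambda_gt0 alpha_gt0 greedy cardO n_gt0.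
have empty_ge0 : 0 <= greedy_objective s d lambda set0.
  rewrite /greedy_objective sumdisp_sumdist /sumdist big_set0 !mulr0 addr0.
  by rewrite mulr_ge0 ?invr_ge0 ?ler0n.
apply: (approx_ratio_arith alpha_gt0 alpha_le1 lambda_gt0 (subm_ratio_ge0 s_mono _ _)
  (subm_ratio_le1 _ _ _) (s_ge0 _) (sumdisp_ge0 d_metric _)).
by move: gain empty_ge0; rewrite /greedy_objective; lra.
Qed.
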